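(* Let $K$ be a simplicial Abelian group (written multiplicatively) and $X$ a simplicial set. Viewing the commutative monoid $\mathrm{Twist}_K(X)$ of $K$-valued twisting functions on $X$ (under levelwise product) as a discrete symmetric monoidal category, the functor $\mathrm{Twist}_K(X)\to\mathsf{Bun}_K(X)$, $\eta\mapsto K\times_\eta X$, is symmetric monoidal, with structure isomorphisms the canonical isomorphism $K\times_1X\cong K\times X$ and the isomorphisms $(K\times_\eta X)\otimes_K(K\times_\xi X)\to K\times_{\eta\xi}X$, $[(k,x),(h,x)]\mapsto(kh,x)$.
   Context: A twisting function $\eta=\{\eta_n:X_n\to K_{n-1}\}_{n\ge1}$ is one for which $d_i(g,x)=(d_ig,d_ix)$ ($i>0$), $d_0(g,x)=(d_0(g)\eta_n(x),d_0x)$, $s_i(g,x)=(s_ig,s_ix)$ make $\{K_n\times X_n\}$ a simplicial set $K\times_\eta X$, a principal $K$-bundle over $X$ via left multiplication on the first factor; $1$ denotes the trivial twisting function. $\mathsf{Bun}_K(X)$ is the groupoid of principal $K$-bundles over $X$ (simplicial sets with levelwise free left $K$-action and quotient map to $X$; morphisms are equivariant maps over $X$), symmetric monoidal under $E\otimes_KF=(E\times_XF)/((ke,f)\sim(e,kf))$ with unit $K\times X$, associator $[e,[f,g]]\mapsto[[e,f],g]$ and braiding $[e,f]\mapsto[f,e]$. *)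

From Stdlib Require Import Arith Relations.
Set Implicit Arguments.

(** Simplicial set data: levels, faces d_i : X_{n+1} -> X_n, degeneracies
    s_i : X_n -> X_{n+1} (indices out of range are junk and never used). *)
Record SSet := mkSSet {
  obj : nat -> Type;
  face : forall n, nat -> obj (S n) -> obj n;
  degen : forall n, nat -> obj n -> obj (S n) }.
Arguments face {s n} i x.
Arguments degen {s n} i x.

Definition simplicial_identities (X : SSet) : Prop :=
  (forall n i j (x : obj X (S (S n))), i < j -> j <= S (S n) ->
      face i (face j x) = face (j - 1) (face i x)) /\
  (forall n i j (x : obj X n), i <= j -> j <= n ->
      degen i (degen j x) = degen (S j) (degen i x)) /\
  (forall n i j (x : obj X (S n)), i < j -> j <= S n ->
      face i (degen j x) = degen (j - 1) (face i x)) /\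
  (forall n i j (x : obj X n), j <= n -> (i = j \/ i = S j) ->
      face i (degen j x) = x) /\
  (forall n i j (x : obj X (S n)), S j < i -> i <= S (S n) ->
      face i (degen j x) = degen j (face (i - 1) x)).

Record SAbGroup := mkSAbGroup {
  grp : SSet;
  gmul : forall n, obj grp n -> obj grp n -> obj grp n;
  gone : forall n, obj grp n;
  ginv : forall n, obj grp n -> obj grp n;
  g_simpl : simplicial_identities grp;
  g_assoc : forall n a b c, gmul n a (gmul n b c) = gmul n (gmul n a b) c;
  g_comm : forall n a b, gmul n a b = gmul n b a;
  g_one_l : forall n a, gmul n (gone n) a = a;
  g_inv_l : forall n a, gmul n (ginv n a) a = gone n;
  g_face_mul : forall n i a b, i <= S n ->
      face i (gmul (S n) a b) = gmul n (face i a) (face i b);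
  g_degen_mul : forall n i a b, i <= n ->
      degen i (gmul n a b) = gmul (S n) (degen i a) (degen i b) }.

Definition tensor_map (A B C D : Type) (f : A -> C) (g : B -> D) (p : A * B) : C * D :=
  (f (fst p), g (snd p)).

Section Twist.
Variables (K : SAbGroup) (X : SSet).

Definition Kn n := obj (grp K) n.
Definition Xn n := obj X n.

Definition twfun := forall n, Xn (S n) -> Kn n.

(** Levels of K x_eta X (the carrier does not depend on eta). *)
Definition tw_obj n := (Kn n * Xn n)%type.

Definition tw_face (eta : twfun) n (i : nat) (p : tw_obj (S n)) : tw_obj n :=
  match i with
  | 0 => (gmul K n (face 0 (fst p)) (eta n (snd p)), face 0 (snd p))
  | _ => (face i (fst p), face i (snd p))
  end.

Definition tw_degen n (i : nat) (p : tw_obj n) : tw_obj (S n) :=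
  (degen i (fst p), degen i (snd p)).

Definition twisted (eta : twfun) : SSet := mkSSet tw_obj (tw_face eta) tw_degen.

Definition twisting (eta : twfun) : Prop := simplicial_identities (twisted eta).

Definition tw_mul (eta xi : twfun) : twfun := fun n x => gmul K n (eta n x) (xi n x).
Definition tw_one : twfun := fun n _ => gone K n.

(** Faces of the untwisted product K x X (degeneracies are tw_degen). *)
Definition triv_face n (i : nat) (p : tw_obj (S n)) : tw_obj n :=
  (face i (fst p), face i (snd p)).

Definition act n (k : Kn n) (p : tw_obj n) : tw_obj n := (gmul K n k (fst p), snd p).

(** Representatives of (K x_eta X) (x)_K (K x_xi X): pairs in the fibre
    product over X, modulo the equivalence relation generated by
    ((k e, f) ~ (e, k f)). *)
Definition tens_obj n := (tw_obj n * tw_obj n)%type.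
Definition in_fib n (p : tens_obj n) : Prop := snd (fst p) = snd (snd p).
Definition tens_rel n (p q : tens_obj n) : Prop :=
  exists (c g h : Kn n) (x : Xn n),
    p = ((gmul K n c g, x), (h, x)) /\ q = ((g, x), (gmul K n c h, x)).
Definition tens_equiv n : relation (tens_obj n) := clos_refl_sym_trans _ (@tens_rel n).

Definition tens_face (eta xi : twfun) n i (p : tens_obj (S n)) : tens_obj n :=
  (tw_face eta i (fst p), tw_face xi i (snd p)).
Definition tens_degen n i (p : tens_obj n) : tens_obj (S n) :=
  (tw_degen i (fst p), tw_degen i (snd p)).
Definition tens_act n (k : Kn n) (p : tens_obj n) : tens_obj n := (act k (fst p), snd p).

(** Structure map mu_{eta,xi} : [(k,x),(h,x)] |-> (k h, x) (on representatives;
    its formula does not depend on eta, xi). *)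
Definition mu n (p : tens_obj n) : tw_obj n := (gmul K n (fst (fst p)) (fst (snd p)), snd (fst p)).

(** Unit structure map K x X -> K x_1 X (the canonical identification). *)
Definition eps n (p : tw_obj n) : tw_obj n := p.

Definition assoc_rep n (p : tw_obj n * (tw_obj n * tw_obj n)) : (tw_obj n * tw_obj n) * tw_obj n :=
  ((fst p, fst (snd p)), snd (snd p)).
Definition lunit_rep n (p : tens_obj n) : tw_obj n := act (fst (fst p)) (snd p).
Definition runit_rep n (p : tens_obj n) : tw_obj n := act (fst (snd p)) (fst p).
Definition braid_rep n (p : tens_obj n) : tens_obj n := (snd p, fst p).

End Twist.

(* A function eta : X_{n+1} -> K_n is a twisting function exactly when it
   satisfies the classical identities
     d_i eta(x) = eta(d_{i+1} x) (i > 0),   d_0 eta(x) . eta(d_0 x) = eta(d_1 x),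
     s_i eta(x) = eta(s_{i+1} x),            eta(s_0 x) = 1:
   they are the first components of the simplicial identities of K x_eta X at
   the points (1, x), and conversely they imply those identities. They are
   multiplicative in eta because K is abelian, so twisting functions form a
   submonoid. Two points [(g,x),(h,x)] of the fibre product are identified in
   the tensor product exactly when they have the same product gh, so mu is a
   bijection; it commutes with d_0 because
   d_0(gh) eta(x) xi(x) = (d_0 g eta(x)) (d_0 h xi(x)), and the coherence
   conditions reduce to associativity and commutativity of K. *)
From Stdlib Require Import Arith Relations Lia.

Section AbelianGroup.
Variable K : SAbGroup.

Lemma gmul_1r n (a : Kn K n) : gmul K n a (gone K n) = a.
Proof. rewrite g_comm. apply g_one_l. Qed.

Lemma gmul_cancel_l n (a b c : Kn K n) : gmul K n a b = gmul K n a c -> b = c.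
Proof.
  intro Eabc.
  rewrite <- (g_one_l K n b), <- (g_one_l K n c), <- (g_inv_l K n a), <- !g_assoc, Eabc.
  reflexivity.
Qed.

Lemma gmul_idem_eq1 n (a : Kn K n) : gmul K n a a = a -> a = gone K n.
Proof. intro Ea. apply (gmul_cancel_l _ a). rewrite Ea, gmul_1r. reflexivity. Qed.

Lemma gmul_CA n (a b c : Kn K n) :
  gmul K n (gmul K n a b) c = gmul K n b (gmul K n a c).
Proof. rewrite (g_comm K n a b), g_assoc. reflexivity. Qed.

Lemma gmul_ACA n (a b c d : Kn K n) :
  gmul K n (gmul K n a b) (gmul K n c d) = gmul K n (gmul K n a c) (gmul K n b d).
Proof. rewrite <- !g_assoc, (g_assoc K n b), (g_comm K n b c), <- g_assoc. reflexivity. Qed.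

Lemma face_gone n i : i <= S n -> face i (gone K (S n)) = gone K n.
Proof.
  intro Hi. apply gmul_idem_eq1. rewrite <- g_face_mul, g_one_l by exact Hi. reflexivity.
Qed.

Lemma degen_gone n i : i <= n -> degen i (gone K n) = gone K (S n).
Proof.
  intro Hi. apply gmul_idem_eq1. rewrite <- g_degen_mul, g_one_l by exact Hi. reflexivity.
Qed.

End AbelianGroup.

Section TwistingFunctions.
Variables (K : SAbGroup) (X : SSet).
Implicit Types eta xi : twfun K X.

Definition twisting_laws eta : Prop :=
  (forall n j (x : Xn X (S (S n))), j <= n ->
     eta n (face (S (S j)) x) = face (S j) (eta (S n) x)) /\
  (forall n (x : Xn X (S (S n))),
     eta n (face 1 x) = gmul K n (face 0 (eta (S n) x)) (eta n (face 0 x))) /\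
  (forall n (x : Xn X n), eta n (degen 0 x) = gone K n) /\
  (forall n j (x : Xn X (S n)), j <= n ->
     eta (S n) (degen (S j) x) = degen j (eta n x)).

Lemma twisting_laws_of_twisting eta : twisting eta -> twisting_laws eta.
Proof.
  destruct (g_simpl K) as [K1 [_ [K3 [K4 _]]]].
  intros [T1 [_ [T3 [T4 _]]]]. split; [|split; [|split]].
  - intros n j x Hj.
    pose proof (T1 n 0 (S (S j)) (gone K (S (S n)), x)) as E.
    apply (f_equal fst) in E; [|lia|lia]; simpl in E.
    rewrite K1, g_face_mul in E by lia.
    eapply gmul_cancel_l; exact E.
  - intros n x.
    pose proof (T1 n 0 1 (gone K (S (S n)), x)) as E.
    apply (f_equal fst) in E; [|lia|lia]; simpl in E.
    rewrite K1, g_face_mul, <- g_assoc in E by lia.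
    eapply gmul_cancel_l; exact E.
  - intros n x.
    pose proof (T4 n 0 0 (gone K n, x)) as E.
    apply (f_equal fst) in E; [|lia|now left]; simpl in E.
    rewrite K4, g_one_l in E by (lia || now left).
    exact E.
  - intros n j x Hj.
    pose proof (T3 n 0 (S j) (gone K (S n), x)) as E.
    apply (f_equal fst) in E; [|lia|lia]; simpl in E.
    rewrite K3 in E by lia; simpl in E.
    rewrite Nat.sub_0_r, g_degen_mul in E by lia.
    eapply gmul_cancel_l; exact E.
Qed.

Lemma twisting_of_laws eta :
  simplicial_identities X -> twisting_laws eta -> twisting eta.
Proof.
  destruct (g_simpl K) as [K1 [K2 [K3 [K4 K5]]]].
  intros [X1 [X2 [X3 [X4 X5]]]] [L1 [L2 [L3 L4]]].
  split; [|split; [|split; [|split]]]; intros n i j [g x]; simpl.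
  - intros Hij Hj.
    destruct i as [|i]; destruct j as [|[|j]]; try lia; simpl.
    + rewrite L2, g_face_mul, K1, X1, g_assoc by lia. reflexivity.
    + rewrite L1, g_face_mul, K1, X1 by lia. reflexivity.
    + rewrite K1, X1 by lia. reflexivity.
  - intros Hij Hj. unfold tw_degen. simpl. rewrite K2, X2 by lia. reflexivity.
  - intros Hij Hj. unfold tw_degen.
    destruct i as [|i]; destruct j as [|j]; try lia; simpl; rewrite K3, X3 by lia; simpl.
    + rewrite L4, g_degen_mul, !Nat.sub_0_r by lia. reflexivity.
    + reflexivity.
  - intros Hj [<- | Hij]; [destruct i as [|i]|subst i]; simpl.
    + rewrite L3, gmul_1r, K4, X4 by (lia || now left). reflexivity.
    + rewrite K4, X4 by (lia || now left). reflexivity.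
    + rewrite K4, X4 by (lia || now right). reflexivity.
  - intros Hij Hj. destruct i as [|[|i]]; try lia. unfold tw_degen. simpl.
    rewrite K5, X5 by lia. reflexivity.
Qed.

Lemma twisting_laws_one : twisting_laws (tw_one K X).
Proof.
  unfold tw_one. split; [|split; [|split]]; intros.
  - rewrite face_gone by lia. reflexivity.
  - rewrite face_gone, gmul_1r by lia. reflexivity.
  - reflexivity.
  - rewrite degen_gone by lia. reflexivity.
Qed.

Lemma twisting_laws_mul eta xi :
  twisting_laws eta -> twisting_laws xi -> twisting_laws (tw_mul eta xi).
Proof.
  intros [A1 [A2 [A3 A4]]] [B1 [B2 [B3 B4]]]. unfold tw_mul.
  split; [|split; [|split]]; intros.
  - rewrite A1, B1, g_face_mul by lia. reflexivity.
  - rewrite A2, B2, g_face_mul by lia. apply gmul_ACA.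
  - rewrite A3, B3. apply g_one_l.
  - rewrite A4, B4, g_degen_mul by lia. reflexivity.
Qed.

Lemma eps_face_one n i (p : tw_obj K X (S n)) :
  eps (tw_face (tw_one K X) i p) = triv_face i (eps p).
Proof. destruct i; simpl; [rewrite gmul_1r|]; reflexivity. Qed.

End TwistingFunctions.

Section TensorProduct.
Variables (K : SAbGroup) (X : SSet).

Lemma mu_tens_equiv n (p q : tens_obj K X n) : tens_equiv p q -> mu p = mu q.
Proof.
  induction 1 as [p q [c [g [h [x [-> ->]]]]] | | p q _ IH | p r q _ IH1 _ IH2].
  - unfold mu. simpl. rewrite gmul_CA. reflexivity.
  - reflexivity.
  - symmetry. exact IH.
  - rewrite IH1. exact IH2.
Qed.

Lemma tens_equiv_normal n (p : tens_obj K X n) :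
  in_fib p -> tens_equiv p ((gone K n, snd (mu p)), mu p).
Proof.
  destruct p as [[g x] [h y]]. unfold in_fib. simpl. intros <-.
  apply rst_step. exists g, (gone K n), h, x. rewrite gmul_1r. split; reflexivity.
Qed.

Lemma tens_equiv_mu n (p q : tens_obj K X n) :
  in_fib p -> in_fib q -> mu p = mu q -> tens_equiv p q.
Proof.
  intros Hp Hq Epq.
  eapply rst_trans; [apply tens_equiv_normal, Hp|].
  rewrite Epq. apply rst_sym, tens_equiv_normal, Hq.
Qed.

Lemma mu_surj n (y : tw_obj K X n) : exists p, in_fib p /\ mu p = y.
Proof.
  destruct y as [g x]. exists ((g, x), (gone K n, x)). split; [reflexivity|].
  unfold mu. simpl. rewrite gmul_1r. reflexivity.
Qed.

Lemma mu_face eta xi n i (p : tens_obj K X (S n)) : in_fib p -> i <= S n ->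
  mu (tens_face eta xi i p) = tw_face (tw_mul eta xi) i (mu p).
Proof.
  destruct p as [[g x] [h y]]. unfold in_fib. simpl. intros <- Hi.
  destruct i; unfold mu, tw_mul; simpl; rewrite g_face_mul by exact Hi.
  - rewrite gmul_ACA. reflexivity.
  - reflexivity.
Qed.

Lemma mu_degen n i (p : tens_obj K X n) : in_fib p -> i <= n ->
  mu (tens_degen i p) = tw_degen i (mu p).
Proof.
  destruct p as [[g x] [h y]]. unfold in_fib. simpl. intros <- Hi.
  unfold mu, tw_degen. simpl. rewrite g_degen_mul by exact Hi. reflexivity.
Qed.

Lemma mu_act n (k : Kn K n) (p : tens_obj K X n) : mu (tens_act k p) = act k (mu p).
Proof. unfold mu, act. simpl. rewrite g_assoc. reflexivity. Qed.

Lemma mu_assoc n (e f g : tw_obj K X n) :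
  mu (tensor_map (@mu K X n) id (assoc_rep (e, (f, g)))) =
  mu (tensor_map id (@mu K X n) (e, (f, g))).
Proof. unfold mu. simpl. rewrite g_assoc. reflexivity. Qed.

Lemma mu_eps_l n (u e : tw_obj K X n) : snd u = snd e ->
  mu (tensor_map (@eps K X n) id (u, e)) = lunit_rep (u, e).
Proof. destruct u, e. unfold mu, lunit_rep, act. simpl. intros ->. reflexivity. Qed.

Lemma mu_eps_r n (u e : tw_obj K X n) :
  mu (tensor_map id (@eps K X n) (e, u)) = runit_rep (e, u).
Proof. unfold mu, runit_rep, act. simpl. rewrite g_comm. reflexivity. Qed.

Lemma mu_braid n (p : tens_obj K X n) : in_fib p -> mu (braid_rep p) = mu p.
Proof.
  destruct p as [[g x] [h y]]. unfold in_fib, mu. simpl. intros ->.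
  rewrite g_comm. reflexivity.
Qed.

End TensorProduct.

Theorem mainTheorem19 (K : SAbGroup) (X : SSet) (HX : simplicial_identities X) :
  (* Twist_K(X) is a commutative monoid under levelwise product *)
  (twisting (tw_one K X) /\
   forall eta xi : twfun K X, twisting eta -> twisting xi -> twisting (tw_mul eta xi)) /\
  (* unit structure map K x X -> K x_1 X is the identity and is simplicial *)
  (forall n i (p : tw_obj K X (S n)), i <= S n ->
      eps (tw_face (tw_one K X) i p) = triv_face i (eps p)) /\
  (* mu_{eta,xi} : (K x_eta X) (x)_K (K x_xi X) -> K x_{eta xi} X is an
     isomorphism of principal K-bundles over X *)
  (forall eta xi : twfun K X, twisting eta -> twisting xi ->
     (forall n (p q : tens_obj K X n), in_fib p -> in_fib q ->
         (tens_equiv p q <-> mu p = mu q)) /\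
     (forall n (y : tw_obj K X n), exists p, in_fib p /\ mu p = y) /\
     (forall n i (p : tens_obj K X (S n)), in_fib p -> i <= S n ->
         mu (tens_face eta xi i p) = tw_face (tw_mul eta xi) i (mu p)) /\
     (forall n i (p : tens_obj K X n), in_fib p -> i <= n ->
         mu (tens_degen i p) = tw_degen i (mu p)) /\
     (forall n (k : Kn K n) (p : tens_obj K X n), in_fib p ->
         mu (tens_act k p) = act k (mu p)) /\
     (forall n (p : tens_obj K X n), in_fib p -> snd (mu p) = snd (fst p))) /\
  (* associativity coherence *)
  (forall eta xi zeta : twfun K X, twisting eta -> twisting xi -> twisting zeta ->
     forall n (e f g : tw_obj K X n), snd e = snd f -> snd f = snd g ->
       mu (tensor_map (@mu K X n) id (assoc_rep (e, (f, g)))) =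
       mu (tensor_map id (@mu K X n) (e, (f, g)))) /\
  (* unit coherence *)
  (forall eta : twfun K X, twisting eta ->
     forall n (u e : tw_obj K X n), snd u = snd e ->
       mu (tensor_map (@eps K X n) id (u, e)) = lunit_rep (u, e) /\
       mu (tensor_map id (@eps K X n) (e, u)) = runit_rep (e, u)) /\
  (* braiding coherence *)
  (forall eta xi : twfun K X, twisting eta -> twisting xi ->
     forall n (p : tens_obj K X n), in_fib p -> mu (braid_rep p) = mu p).
Proof.
  split; [split|split; [|split; [|split; [|split]]]].
  - apply twisting_of_laws; [exact HX | apply twisting_laws_one].
  - intros eta xi He Hxi. apply twisting_of_laws; [exact HX|].
    apply twisting_laws_mul; apply twisting_laws_of_twisting; assumption.
  - intros n i p _. apply eps_face_one.
  - intros eta xi _ _. split; [|split; [|split; [|split; [|split]]]].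
    + intros n p q Hp Hq. split; [apply mu_tens_equiv | apply tens_equiv_mu; assumption].
    + apply mu_surj.
    + apply mu_face.
    + apply mu_degen.
    + intros n k p _. apply mu_act.
    + reflexivity.
  - intros. apply mu_assoc.
  - intros eta _ n u e Hue. split; [apply mu_eps_l, Hue | apply mu_eps_r].
  - intros eta xi _ _. apply mu_braid.
Qed.
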